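(* Let $R$ be a regular ring with unity and let $e_1,\dots,e_n$ be idempotents of $R$ with $e_ie_j=0$ for all $i\ne j$. Then the following are equivalent: (i) $e_1+e_2+\dots+e_n=1$; (ii) if $e$ is an idempotent of $R$ with $e_i\,\omega\,e$ for every $i=1,\dots,n$, then $e=1$.
   Context: A ring is regular if for every $x$ there is $y$ with $xyx=x$. For idempotents, $f\,\omega\,e$ means $fe=f=ef$. *)

From mathcomp Require Import all_boot all_order all_algebra.
Set Implicit Arguments. Unset Strict Implicit. Unset Printing Implicit Defensive.
Import GRing.Theory.
Local Open Scope ring_scope.

Definition regular_ring (R : pzRingType) : Prop :=
  forall x : R, exists y : R, x * y * x = x.

Definition idem_el (R : pzRingType) (e : R) : Prop := e * e = e.

Definition omega_rel (R : pzRingType) (f e : R) : Prop := f * e = f /\ e * f = f.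

From mathcomp Require Import all_boot all_order all_algebra.
Import GRing.Theory.
Local Open Scope ring_scope.

(* For (i) => (ii): if every [e i] is absorbed by [f] then so is their sum [1],
   hence [f = 1].  For (ii) => (i): the sum of pairwise orthogonal idempotents
   is an idempotent above each of them, so (ii) forces it to be [1]. *)

Section OrthogonalIdempotents.

Variables (R : pzRingType) (I : finType) (e : I -> R).
Hypothesis e_idem : forall i, idem_el (e i).
Hypothesis e_orth : forall i j, i != j -> e i * e j = 0.

Lemma mul_idem_sumr i : e i * \sum_j e j = e i.
Proof.
rewrite mulr_sumr (bigD1 i) //= e_idem big1 ?addr0 // => j ji.
by apply: e_orth; rewrite eq_sym.
Qed.

Lemma mul_sum_idemr i : (\sum_j e j) * e i = e i.
Proof. by rewrite mulr_suml (bigD1 i) //= e_idem big1 ?addr0 // => j /e_orth. Qed.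

Lemma idem_sum : idem_el (\sum_j e j).
Proof. by rewrite /idem_el mulr_suml; under eq_bigr do rewrite mul_idem_sumr. Qed.

Lemma omega_idem_sum i : omega_rel (e i) (\sum_j e j).
Proof. by split; [apply: mul_idem_sumr | apply: mul_sum_idemr]. Qed.

End OrthogonalIdempotents.

Lemma sum_omega_mulr (R : pzRingType) (I : finType) (e : I -> R) (f : R) :
  (forall i, omega_rel (e i) f) -> (\sum_i e i) * f = \sum_i e i.
Proof. by move=> ef; rewrite mulr_suml; apply: eq_bigr => i _; case: (ef i). Qed.

Theorem proposition4p1 (R : pzRingType) (n : nat) (e : 'I_n -> R)
  (hR : regular_ring R)
  (he : forall i, idem_el (e i))
  (horth : forall i j, i != j -> e i * e j = 0) :
  (\sum_(i < n) e i = 1) <->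
  (forall f : R, idem_el f -> (forall i, omega_rel (e i) f) -> f = 1).
Proof.
split=> [sum1 f _ ef | maximal].
- by rewrite -[f]mul1r -sum1 sum_omega_mulr.
- apply: maximal; first exact: idem_sum.
  exact: omega_idem_sum.
Qed.
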